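(* Let $n\ge 1$, let $A\in \mathrm{M}_n(E_0)$ and $B\in \mathrm{M}_n(E_1)$. Let \[p_A(x)=\det(xI_n-A)=\alpha_0+\alpha_1x+\cdots+\alpha_{n-1}x^{n-1}+\alpha_nx^n\in E_0[x]\] be the characteristic polynomial of $A$ (so $\alpha_n=1$). Define elements $\beta_0,\dots,\beta_n\in E_1$ by $\beta_n=0$ and, descending for $k=n-1,n-2,\dots,0$, \[\beta_k=\Big\{-\frac{1}{n-k}\sum_{i=1}^{n-k}\beta_{k+i}\,\mathrm{tr}(A^i)\Big\}+\Big\{-\frac{1}{n-k}\sum_{\substack{r+s\le n-k-1\\ r,s\ge 0}}\alpha_{k+r+s+1}\,\mathrm{tr}(A^rBA^s)\Big\}.\] Then \[\beta_0I_n+\sum_{k=1}^{n}\Big\{\beta_kA^k+\alpha_k\big(A^{k-1}B+A^{k-2}BA+\cdots+ABA^{k-2}+BA^{k-1}\big)\Big\}=0,\] where $I_n$ is the $n\times n$ identity matrix.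
   Context: $K$ is a field of characteristic zero. $E$ is the infinite-dimensional Grassmann (exterior) algebra over $K$, generated by countably many indeterminates $v_1,v_2,\dots$ subject to $v_iv_j+v_jv_i=0$ for all $i,j$ (so $v_i^2=0$). $E=E_0\oplus E_1$ is its natural $\mathbb{Z}_2$-grading: $E_0$ (resp. $E_1$) is the $K$-span of products of an even (resp. odd) number of generators; $E_0$ is commutative and central in $E$. $\mathrm{M}_n(R)$ denotes the algebra of $n\times n$ matrices over $R$. For a matrix $M$ over $E$, $\mathrm{tr}(M)$ is the sum of its diagonal entries. Since $E_0$ is commutative, $\det(xI_n-A)$ for $A\in\mathrm{M}_n(E_0)$ is the usual determinant over the commutative ring $E_0[x]$. $A^0=I_n$. *)

From HB Require Import structures.
From mathcomp Require Import all_boot all_order all_algebra.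
Set Implicit Arguments.
Unset Strict Implicit.
Unset Printing Implicit Defensive.
Import GRing.Theory.
Local Open Scope ring_scope.

(* The infinite Grassmann algebra, characterised up to isomorphism:
   a K-algebra R with a family of elements v : nat -> R such that
   (1) v_i v_j + v_j v_i = 0 for all i j  (defining relations),
   (2) R is spanned (over K) by the products v_{i1} ... v_{ik} (generation),
   (3) the standard monomials v_{i1}...v_{ik}, i1 < ... < ik, are linearly
       independent over K (no further relations: R is the free algebra on the
       v_i modulo (1)). *)

Definition gmono (K : fieldType) (R : algType K) (v : nat -> R) (s : seq nat) : R :=
  \prod_(i <- s) v i.

Definition is_grassmann (K : fieldType) (R : algType K) (v : nat -> R) : Prop :=
  [/\ (forall i j, v i * v j + v j * v i = 0),
      (forall x : R, exists (S : seq (seq nat)) (c : seq nat -> K),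
          x = \sum_(s <- S) c s *: gmono v s) &
      (forall (S : seq (seq nat)) (c : seq nat -> K),
          uniq S -> all (sorted ltn) S ->
          \sum_(s <- S) c s *: gmono v s = 0 ->
          forall s, s \in S -> c s = 0)].

Definition Eeven (K : fieldType) (R : algType K) (v : nat -> R) (x : R) : Prop :=
  exists (S : seq (seq nat)) (c : seq nat -> K),
    all (fun s => ~~ odd (size s)) S /\ x = \sum_(s <- S) c s *: gmono v s.

Definition Eodd (K : fieldType) (R : algType K) (v : nat -> R) (x : R) : Prop :=
  exists (S : seq (seq nat)) (c : seq nat -> K),
    all (fun s => odd (size s)) S /\ x = \sum_(s <- S) c s *: gmono v s.

(* det(x I_n - A), computed by the Leibniz formula (this is mathcomp's
   char_poly, whose definition requires a commutative ring; here the entries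
   lie in the commutative subring E_0 of R). *)
Definition gchar_poly (R : nzRingType) n (A : 'M[R]_n) : {poly R} :=
  \det ('X%:M - map_mx polyC A).

From HB Require Import structures.
From mathcomp Require Import all_boot all_order all_algebra.
From mathcomp Require Import fingroup perm boolp zify.
Set Implicit Arguments.
Unset Strict Implicit.
Unset Printing Implicit Defensive.
Import GRing.Theory.
Local Open Scope ring_scope.

(* The entries of A are even Grassmann elements, hence
   central, so A is a matrix over the commutative ring Z of central elements;
   B, with odd entries, is not.  Everything in the theorem is linear in B, so
   we write B = sum_(a,b) B_ab E_ab with matrix units E_ab over Z and reduce
   to the pairs (A, E_ab), which live over a commutative ring C.
   For matrices A, B over C, the characteristic polynomial of A + tB over C[t]
   has coefficients alpha_k + t dchar_k + O(t^2), and
   - the t-coefficient of Cayley-Hamilton for A + tB is the identity of the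
     theorem with beta_k := dchar_k;
   - the t-coefficient of Newton's identities for A + tB (proved through the
     coefficient matrices of adj (xI - M)) is the defining recursion of beta,
     multiplied by n - k.
   Lifting back along B = sum B_ab E_ab gives a sequence dchar_lift satisfying
   both; as the recursion has a unique solution in characteristic 0, it is
   beta, and the theorem follows. *)

(* The center of a ring, as a commutative ring whose elements commute with
   everything: this is where the entries of A (even Grassmann elements) live,
   so that characteristic polynomials and Cayley-Hamilton become available. *)
Section Center.

Variable R : nzRingType.

Definition central : {pred R} := fun x => `[< forall y : R, x * y = y * x >].

Lemma centralP (x : R) : reflect (forall y, x * y = y * x) (x \in central).
Proof. exact: asboolP. Qed.

Lemma central_subring_closed : subring_closed central.
Proof.
split.
- by apply/centralP => y; rewrite mul1r mulr1.
- move=> x y /centralP hx /centralP hy; apply/centralP => z.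
  by rewrite mulrBl mulrBr hx hy.
- move=> x y /centralP hx /centralP hy; apply/centralP => z.
  by rewrite -mulrA hy mulrA hx mulrA.
Qed.

Record center := Center { center_val :> R; center_valP : center_val \in central }.
HB.instance Definition _ := [isSub for center_val].
HB.instance Definition _ := [Choice of center by <:].
HB.instance Definition _ :=
  GRing.SubChoice_isSubNzRing.Build R central center central_subring_closed.

Lemma center_comm (z : center) (y : R) : val z * y = y * val z.
Proof. exact: (centralP _ (center_valP z)). Qed.

Lemma center_mulC : commutative (@GRing.mul center).
Proof. by move=> x y; apply: val_inj; rewrite /= center_comm. Qed.
HB.instance Definition _ := GRing.PzRing_hasCommutativeMul.Build center center_mulC.

End Center.

Lemma deriv_prod (C : comNzRingType) (I : eqType) (r : seq I) (F : I -> {poly C}) :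
  uniq r ->
  (\prod_(i <- r) F i)^`() = \sum_(i <- r) (F i)^`() * \prod_(j <- r | j != i) F j.
Proof.
elim: r => [|a r IH] /=; first by rewrite !big_nil derivC.
case/andP => a_notin_r uniq_r.
have drop_a : \prod_(j <- r | j != a) F j = \prod_(j <- r) F j.
  rewrite big_seq_cond [RHS]big_seq; apply: eq_bigl => j.
  by case: (boolP (j \in r)) => // jr; apply: contraNneq a_notin_r => <-.
rewrite big_cons derivM IH // [in RHS]big_cons /= big_distrr /= big_cons eqxx drop_a.
congr (_ + _); rewrite !big_seq; apply: eq_bigr => i ir.
rewrite big_cons mulrCA; case: eqP => [ai | _] //.
by rewrite ai ir in a_notin_r.
Qed.

(* The derivative of the determinant of a polynomial matrix whose entrywise
   derivative is the identity is the sum of the principal cofactors; applied to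
   xI - M it gives p_M' = tr (adj (xI - M)). *)
Lemma deriv_det (C : comNzRingType) n (D : 'M[{poly C}]_n) :
  (forall i j, (D i j)^`() = (i == j)%:R) ->
  (\det D)^`() = \sum_i cofactor D i i.
Proof.
move=> dD.
have sgC (b : bool) : (-1) ^+ b = ((-1) ^+ b)%:P :> {poly C} by rewrite rmorph_sign.
rewrite /determinant raddf_sum /=.
under eq_bigr do rewrite sgC mul_polyC derivZ deriv_prod ?index_enum_uniq // scaler_sumr.
rewrite exchange_big /=; apply: eq_bigr => i _.
rewrite expand_cofactor [RHS]big_mkcond /=; apply: eq_bigr => s _.
rewrite dD [_ == i]eq_sym; case: (i == s i); last by rewrite mul0r scaler0.
rewrite mul1r -mul_polyC -sgC; congr (_ * _).
by apply: eq_bigl => j; rewrite eq_sym.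
Qed.

(* Newton's identities for a matrix M over a commutative ring, obtained from
   the coefficient matrices N_j of adj (xI - M) = sum_j N_j x^j. *)
Section Newton.

Variables (C : comNzRingType) (n : nat) (M : 'M[C]_n).
Local Notation p := (char_poly M).

Definition adj_coef (j : nat) : 'M[C]_n :=
  \matrix_(a, b) ((\adj (char_poly_mx M)) a b)`_j.

(* tr N_j = (j+1) p_(j+1), the coefficientwise form of p' = tr adj (xI - M). *)
Lemma trace_adj_coef j : \tr (adj_coef j) = p`_j.+1 *+ j.+1.
Proof.
have dD i k : ((char_poly_mx M) i k)^`() = (i == k)%:R.
  by rewrite !mxE derivB derivMn derivX derivC subr0.
rewrite /char_poly -coef_deriv deriv_det // coef_sum.
by apply: eq_bigr => i _; rewrite !mxE.
Qed.

(* Comparing coefficients of x^j in (xI - M) adj (xI - M) = p I. *)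
Lemma adj_coef_rec j :
  (if j is j'.+1 then adj_coef j' else 0) - M *m adj_coef j = (p`_j)%:M.
Proof.
apply/matrixP => a b.
have := congr1 (fun X : 'M[{poly C}]_n => (X a b)`_j) (mul_mx_adj (char_poly_mx M)).
rewrite /char_poly_mx mulmxBl mul_scalar_mx !mxE coefB coefXM coefMn.
rewrite -/(char_poly_mx M) => <-; rewrite coef_sum; congr (_ - _).
  by case: j => [|j] //=; rewrite !mxE.
by apply: eq_bigr => c _; rewrite !mxE coefCM.
Qed.

(* The adjugate has degree < n: since p_j = 0 for j > n, the recurrence gives
   N_j = M^m N_(j+m), and N_(j+m) vanishes for m large. *)
Lemma adj_coef_ge j : (n <= j)%N -> adj_coef j = 0.
Proof.
have shift k : (n <= k)%N -> adj_coef k = M *m adj_coef k.+1.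
  move=> nk; have /eqP := adj_coef_rec k.+1.
  rewrite [p`__]nth_default ?size_char_poly // scalar_mx_is_nmod_morphism.
  by rewrite subr_eq0 => /eqP.
have shift_iter m k : (n <= k)%N -> adj_coef k = M ^+ m *m adj_coef (k + m).
  elim: m k => [|m IH] k nk; first by rewrite expr0 mul1mx addn0.
  rewrite IH // shift; last exact: leq_trans nk (leq_addr _ _).
  by rewrite mulmxA addnS exprSr.
pose d := \max_a \max_b size ((\adj (char_poly_mx M)) a b).
have adj_coef_big k : (d <= k)%N -> adj_coef k = 0.
  move=> dk; apply/matrixP => a b; rewrite [LHS]mxE [RHS]mxE nth_default //.
  apply: leq_trans dk; apply: leq_trans (leq_bigmax a); exact: (leq_bigmax b).
by move=> nj; rewrite (shift_iter d j nj) adj_coef_big ?mulmx0 // leq_addl.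
Qed.

(* Unrolling the recurrence downwards from N_n = 0. *)
Lemma mul_adj_coef k d : (k + d = n)%N ->
  M *m adj_coef k = \sum_(i < d) p`_(k + i + 1) *: M ^+ i.+1.
Proof.
elim: d k => [|d IH] k kd.
  by rewrite big_ord0 adj_coef_ge ?mulmx0 // -kd addn0.
have /eqP := adj_coef_rec k.+1; rewrite subr_eq => /eqP ->.
rewrite mulmxDr IH; last by rewrite addSnnS.
rewrite big_ord_recl /= addn0 addn1 expr1 mul_mx_scalar; congr (_ + _).
rewrite mulmx_sumr; apply: eq_bigr => i _.
by rewrite -scalemxAr /bump /= add1n addSnnS [M ^+ i.+2]exprS.
Qed.

Lemma newton_identity k : (k <= n)%N ->
  p`_k *+ (n - k) = - \sum_(i < n - k) p`_(k + i + 1) * \tr (M ^+ i.+1).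
Proof.
move=> kn; have := congr1 mxtrace (adj_coef_rec k).
rewrite mxtrace_scalar raddfB /= (mul_adj_coef (subnKC kn)) (raddf_sum (@mxtrace C n)).
have -> : \tr (if k is j.+1 then adj_coef j else 0) = p`_k *+ k.
  by case: (k) => [|j]; rewrite ?mxtrace0 ?mulr0n // trace_adj_coef.
have -> : p`_k *+ n = p`_k *+ (n - k) + p`_k *+ k by rewrite -mulrnDr subnK.
move=> trace_eq; apply: (addIr (p`_k *+ k)); rewrite -trace_eq addrC.
by congr (- _ + _); apply: eq_bigr => i _; exact: mxtraceZ.
Qed.

End Newton.

Lemma sum_triangle (V : zmodType) (f : nat -> nat -> V) m :
  \sum_(i < m) \sum_(j < i.+1) f (i - j)%N j = \sum_(r < m) \sum_(s < m - r) f r s.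
Proof.
elim: m => [|m IH]; first by rewrite !big_ord0.
rewrite big_ord_recr /= IH.
have -> : \sum_(r < m.+1) \sum_(s < m.+1 - r) f r s =
          \sum_(r < m.+1) (\sum_(s < m - r) f r s + f r (m - r)%N).
  by apply: eq_bigr => r _; rewrite subSn ?big_ord_recr // -ltnS.
rewrite big_split /= [in RHS]big_ord_recr /= subnn big_ord0 addr0; congr (_ + _).
rewrite (reindex_inj rev_ord_inj) /=; apply: eq_bigr => j _.
by rewrite subSS subKn // -ltnS.
Qed.

Lemma coef1M (C : comNzRingType) (p q : {poly C}) :
  (p * q)`_1 = p`_0 * q`_1 + p`_1 * q`_0.
Proof. by rewrite coefM big_ord_recr big_ord_recr big_ord0 /= add0r. Qed.

(* A^(k-1) B + A^(k-2) B A + ... + B A^(k-1): the t-coefficient of (A + tB)^k. *)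
Definition dpow (R : nzRingType) n (A B : 'M[R]_n) (k : nat) : 'M[R]_n :=
  \sum_(j < k) A ^+ (k.-1 - j) *m B *m A ^+ j.

(* The recursion behind (A + tB)^(k+1) = (A + tB)^k (A + tB). *)
Lemma dpowS (R : nzRingType) n (A B : 'M[R]_n) k :
  dpow A B k.+1 = A ^+ k *m B + dpow A B k *m A.
Proof.
rewrite /dpow big_ord_recl /= subn0 expr0 mulmx1; congr (_ + _).
rewrite mulmx_suml; apply: eq_bigr => j _.
rewrite /bump /= add1n [A ^+ j.+1]exprSr subnS predn_sub -!mulmxA.
by do 2 congr (_ *m _); exact: mulmxA.
Qed.

Section Perturbation.

Variables (C : comNzRingType) (n : nat) (A B : 'M[C]_n).

Definition pert : 'M[{poly C}]_n := map_mx polyC A + 'X *: map_mx polyC B.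

Definition coefmx (X : 'M[{poly C}]_n) (j : nat) : 'M[C]_n :=
  \matrix_(a, b) (X a b)`_j.

Definition dchar (k : nat) : C := ((char_poly pert)`_k)`_1.

Lemma coefmx0M (X Y : 'M[{poly C}]_n) : coefmx (X *m Y) 0 = coefmx X 0 *m coefmx Y 0.
Proof.
apply/matrixP => a b; rewrite !mxE coef_sum; apply: eq_bigr => c _.
by rewrite !mxE coef0M.
Qed.

Lemma coefmx1M (X Y : 'M[{poly C}]_n) :
  coefmx (X *m Y) 1 = coefmx X 0 *m coefmx Y 1 + coefmx X 1 *m coefmx Y 0.
Proof.
apply/matrixP => a b; rewrite !mxE coef_sum -big_split; apply: eq_bigr => c _.
by rewrite !mxE coef1M.
Qed.

Lemma coefmx_sum (I : finType) (F : I -> 'M[{poly C}]_n) j :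
  coefmx (\sum_i F i) j = \sum_i coefmx (F i) j.
Proof.
apply/matrixP => a b; rewrite !mxE summxE coef_sum summxE.
by apply: eq_bigr => i _; rewrite !mxE.
Qed.

Lemma coefmxZ1 (c : {poly C}) (X : 'M[{poly C}]_n) :
  coefmx (c *: X) 1 = c`_0 *: coefmx X 1 + c`_1 *: coefmx X 0.
Proof. by apply/matrixP => a b; rewrite !mxE coef1M. Qed.

Lemma trace_coefmx (X : 'M[{poly C}]_n) j : (\tr X)`_j = \tr (coefmx X j).
Proof. by rewrite coef_sum; apply: eq_bigr => i _; rewrite mxE. Qed.

Lemma coefmx_pert_exp k :
  coefmx (pert ^+ k) 0 = A ^+ k /\ coefmx (pert ^+ k) 1 = dpow A B k.
Proof.
have pert0 : coefmx pert 0 = A.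
  by apply/matrixP => a b; rewrite !mxE coefD coefXM coefC addr0.
have pert1 : coefmx pert 1 = B.
  by apply/matrixP => a b; rewrite !mxE coefD coefXM !coefC add0r.
elim: k => [|k [IH0 IH1]].
  rewrite /dpow big_ord0 !expr0; split; apply/matrixP => a b.
    by rewrite !mxE coefMn coef1.
  by rewrite !mxE coefMn coef1 mul0rn.
rewrite exprSr -[_ * pert]/(_ *m pert) coefmx0M coefmx1M.
by rewrite IH0 IH1 pert0 pert1 dpowS exprSr.
Qed.

Lemma char_pert_coef0 k : ((char_poly pert)`_k)`_0 = (char_poly A)`_k.
Proof.
have eval0 : map_mx (horner_eval 0) pert = A.
  rewrite -[RHS](proj1 (coefmx_pert_exp 1)) expr1; apply/matrixP => a b.
  by rewrite !mxE horner_evalE horner_coef0.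
have := map_char_poly (horner_eval (0 : C)) pert.
by rewrite eval0 => <-; rewrite coef_map /= horner_evalE horner_coef0.
Qed.

(* p_(A + tB) is monic, so its leading coefficient has no t-part. *)
Lemma dchar_n : dchar n = 0.
Proof.
have /monicP := char_poly_monic pert.
by rewrite lead_coefE size_char_poly /dchar => ->; rewrite coef1.
Qed.

(* The t-coefficient of Newton's identity for A + tB. *)
Lemma dchar_newton k : (k < n)%N ->
  dchar k *+ (n - k) =
  - (\sum_(1 <= i < (n - k).+1) dchar (k + i) * \tr (A ^+ i)
     + \sum_(r < n - k) \sum_(s < n - k - r)
          (char_poly A)`_(k + r + s + 1) * \tr (A ^+ r *m B *m A ^+ s)).
Proof.
move=> kn; have newton := newton_identity pert (ltnW kn).
have -> : dchar k *+ (n - k) = ((char_poly pert)`_k *+ (n - k))`_1.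
  by rewrite coefMn.
rewrite newton coefN coef_sum; congr (- _).
under eq_bigr do rewrite coef1M !trace_coefmx char_pert_coef0
  (proj1 (coefmx_pert_exp _)) (proj2 (coefmx_pert_exp _)).
rewrite big_split /= addrC; congr (_ + _).
  by rewrite big_add1 big_mkord; apply: eq_bigr => i _; rewrite addn1 addnS.
rewrite -(sum_triangle (fun r s =>
  (char_poly A)`_(k + r + s + 1) * \tr (A ^+ r *m B *m A ^+ s))).
apply: eq_bigr => i _; rewrite /dpow raddf_sum big_distrr /=.
by apply: eq_bigr => j _; rewrite -[(k + (i - j) + j)%N]addnA subnK // -ltnS.
Qed.

End Perturbation.

(* The t-coefficient of the Cayley-Hamilton identity p_(A+tB)(A + tB) = 0. *)
Lemma dchar_cayley_hamilton (C : comNzRingType) n (A B : 'M[C]_n) : (0 < n)%N ->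
  dchar A B 0 *: 1%:M +
  \sum_(1 <= k < n.+1) (dchar A B k *: A ^+ k + (char_poly A)`_k *: dpow A B k) = 0.
Proof.
case: n A B => [//|m] A B _.
have hornerE : horner_mx (pert A B) (char_poly (pert A B)) =
    \sum_(k < m.+2) (char_poly (pert A B))`_k *: pert A B ^+ k.
  rewrite -{1}[char_poly _]coefK poly_def size_char_poly rmorph_sum.
  apply: eq_bigr => k _; rewrite -mul_polyC rmorphM /= horner_mx_C.
  by rewrite rmorphXn /= horner_mx_X -mul_scalar_mx.
have := congr1 (fun X => coefmx X 1) (Cayley_Hamilton (pert A B)).
rewrite hornerE coefmx_sum.
have -> : coefmx 0 1 = 0 :> 'M[C]_m.+1 by apply/matrixP => a b; rewrite !mxE coef0.
have dpow0 : dpow A B 0 = 0 by rewrite /dpow big_ord0.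
move=> coef1_CH; rewrite -[RHS]coef1_CH big_ord_recl big_add1 big_mkord /=; congr (_ + _).
  rewrite coefmxZ1 char_pert_coef0 (proj1 (coefmx_pert_exp _ _ _)).
  by rewrite (proj2 (coefmx_pert_exp _ _ _)) dpow0 scaler0 add0r expr0.
apply: eq_bigr => k _.
rewrite coefmxZ1 char_pert_coef0 (proj1 (coefmx_pert_exp _ _ _)).
by rewrite (proj2 (coefmx_pert_exp _ _ _)) addrC.
Qed.

(* Even Grassmann elements are central: a generator anticommutes with each
   generator, so it commutes with a product of an even number of them. *)
Section GrassmannEven.

Variables (K : fieldType) (R : algType K) (v : nat -> R).
Hypothesis anticomm : forall i j, v i * v j + v j * v i = 0.

Lemma gmono_cons a s : gmono v (a :: s) = v a * gmono v s.
Proof. by rewrite /gmono big_cons. Qed.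

Lemma gmono_mul_gen s i :
  gmono v s * v i = if odd (size s) then - (v i * gmono v s) else v i * gmono v s.
Proof.
elim: s => [|a s IH] /=; first by rewrite /gmono big_nil mul1r mulr1.
have swap : v a * v i = - (v i * v a) by apply/eqP; rewrite -addr_eq0 anticomm.
rewrite gmono_cons -mulrA IH; case: (odd (size s)) => /=.
  by rewrite mulrN !mulrA swap mulNr opprK.
by rewrite !mulrA swap mulNr.
Qed.

Lemma even_gmono_comm s t :
  ~~ odd (size s) -> gmono v s * gmono v t = gmono v t * gmono v s.
Proof.
move=> even_s; elim: t => [|a t IH]; first by rewrite /gmono big_nil mul1r mulr1.
by rewrite gmono_cons mulrA gmono_mul_gen (negbTE even_s) -!mulrA IH.
Qed.
End GrassmannEven.

Lemma Eeven_central (K : fieldType) (R : algType K) (v : nat -> R) x :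
  is_grassmann v -> Eeven v x -> x \in @central R.
Proof.
case=> anticomm spanned _ [S [c [even_S ->]]]; apply/centralP => y.
have [T [d ->]] := spanned y.
rewrite mulr_suml mulr_sumr; apply: eq_big_seq => s sS.
rewrite mulr_suml mulr_sumr; apply: eq_bigr => t _.
rewrite -!scalerAl -!scalerAr !scalerA mulrC even_gmono_comm //.
exact: (allP even_S).
Qed.

(* Transfer to a matrix A with central entries and an arbitrary B: writing
   B = sum_(a,b) B_ab E_ab with matrix units E_ab, every expression linear in
   B is the B_ab-combination of the same expressions for the pairs (A, E_ab),
   which live over the commutative ring of central elements. *)
Section CentralTransfer.

Variables (R : nzRingType) (n : nat) (A0 : 'M[center R]_n) (B : 'M[R]_n).
Local Notation A := (map_mx val A0).
Local Notation E p := (delta_mx p.1 p.2 : 'M[center R]_n).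

Lemma map_mx_exp (X : 'M[center R]_n) k : map_mx val (X ^+ k) = map_mx val X ^+ k.
Proof.
elim: k => [|k IH]; first by rewrite !expr0 map_mx1.
by rewrite !exprS -[X * _]/(X *m _) map_mxM IH.
Qed.

Lemma mid_transfer (X Y : 'M[center R]_n) :
  map_mx val X *m B *m map_mx val Y =
  \sum_(p : 'I_n * 'I_n) B p.1 p.2 *: map_mx val (X *m E p *m Y).
Proof.
rewrite -(pair_bigA _ (fun a b => B a b *: map_mx val (X *m delta_mx a b *m Y))).
rewrite {1}[B]matrix_sum_delta mulmx_sumr mulmx_suml.
apply: eq_bigr => a _; rewrite mulmx_sumr mulmx_suml; apply: eq_bigr => b _.
have central_scale (M : 'M[R]_n) : map_mx val X *m (B a b *: M) = B a b *: (map_mx val X *m M).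
  apply/matrixP => i j; rewrite !mxE mulr_sumr; apply: eq_bigr => c _.
  by rewrite !mxE mulrA center_comm -mulrA.
by rewrite central_scale -scalemxAl !map_mxM map_delta_mx.
Qed.

Lemma trace_mid_transfer r s :
  \tr (A ^+ r *m B *m A ^+ s) =
  \sum_(p : 'I_n * 'I_n) B p.1 p.2 * val (\tr (A0 ^+ r *m E p *m A0 ^+ s)).
Proof.
rewrite -!map_mx_exp mid_transfer raddf_sum /=.
by apply: eq_bigr => p _; rewrite mxtraceZ (trace_map_mx val).
Qed.

Lemma dpow_transfer k :
  dpow A B k = \sum_(p : 'I_n * 'I_n) B p.1 p.2 *: map_mx val (dpow A0 (E p) k).
Proof.
rewrite /dpow; under [RHS]eq_bigr do rewrite (map_mx_sum val) scaler_sumr.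
rewrite exchange_big /=; apply: eq_bigr => j _.
by rewrite -!map_mx_exp mid_transfer.
Qed.

Lemma char_poly_central k : (char_poly A)`_k = val (char_poly A0)`_k.
Proof. by rewrite -map_char_poly coef_map. Qed.

(* The lift of dchar: the candidate for the sequence beta of the theorem. *)
Definition dchar_lift k : R :=
  \sum_(p : 'I_n * 'I_n) B p.1 p.2 * val (dchar A0 (E p) k).

Lemma dchar_lift_n : dchar_lift n = 0.
Proof. by rewrite /dchar_lift big1 // => p _; rewrite dchar_n mulr0. Qed.

Lemma dchar_lift_newton k : (k < n)%N ->
  dchar_lift k *+ (n - k) =
  - (\sum_(1 <= i < (n - k).+1) dchar_lift (k + i) * \tr (A ^+ i)
     + \sum_(r < n - k) \sum_(s < n - k - r)
          (char_poly A)`_(k + r + s + 1) * \tr (A ^+ r *m B *m A ^+ s)).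
Proof.
move=> kn; rewrite /dchar_lift -sumrMnl.
under eq_bigr do rewrite -mulrnAr -rmorphMn dchar_newton // rmorphN rmorphD
  !rmorph_sum mulrN mulrDr.
rewrite sumrN big_split; congr (- (_ + _)).
  under eq_bigr do rewrite mulr_sumr.
  rewrite exchange_big; apply: eq_bigr => i _.
  rewrite mulr_suml -map_mx_exp (trace_map_mx val); apply: eq_bigr => p _.
  exact: mulrA.
under eq_bigr do (rewrite mulr_sumr; under eq_bigr do rewrite rmorph_sum mulr_sumr).
rewrite exchange_big; apply: eq_bigr => r _.
rewrite exchange_big; apply: eq_bigr => s _.
rewrite char_poly_central trace_mid_transfer mulr_sumr; apply: eq_bigr => p _.
by rewrite rmorphM mulrA -(center_comm _ (B p.1 p.2)) mulrA.
Qed.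

Lemma dchar_lift_cayley_hamilton : (0 < n)%N ->
  dchar_lift 0 *: 1%:M +
  \sum_(1 <= k < n.+1)
     (dchar_lift k *: A ^+ k + (char_poly A)`_k *: dpow A B k) = 0.
Proof.
move=> n_gt0.
transitivity (\sum_(p : 'I_n * 'I_n) B p.1 p.2 *: map_mx val
   (dchar A0 (E p) 0 *: 1%:M + \sum_(1 <= k < n.+1)
      (dchar A0 (E p) k *: A0 ^+ k + (char_poly A0)`_k *: dpow A0 (E p) k))); last first.
  by rewrite big1 // => p _; rewrite dchar_cayley_hamilton // map_mx0 scaler0.
under [RHS]eq_bigr do rewrite map_mxD map_mx_sum map_mxZ map_mx1 scalerDr scaler_sumr.
rewrite [RHS]big_split /dchar_lift scaler_suml; congr (_ + _).
  by apply: eq_bigr => p _; rewrite scalerA.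
rewrite exchange_big; apply: eq_big_nat => k _.
under [RHS]eq_bigr do rewrite map_mxD !map_mxZ scalerDr.
rewrite big_split scaler_suml dpow_transfer scaler_sumr; congr (_ + _).
  by apply: eq_bigr => p _; rewrite map_mx_exp scalerA.
apply: eq_bigr => p _.
by rewrite char_poly_central !scalerA center_comm.
Qed.

End CentralTransfer.

Lemma descending_recursion_unique (K : fieldType) (charK0 : [pchar K] =i pred0)
    (R : lalgType K) n (t c x y : nat -> R) :
  x n = y n ->
  (forall k, (k < n)%N ->
     x k = - (((n - k)%:R : K)^-1 *: \sum_(1 <= i < (n - k).+1) x (k + i) * t i)
           - (((n - k)%:R : K)^-1 *: c k)) ->
  (forall k, (k < n)%N ->
     y k *+ (n - k) = - (\sum_(1 <= i < (n - k).+1) y (k + i) * t i + c k)) ->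
  forall k, (k <= n)%N -> x k = y k.
Proof.
move=> xn xrec yrec k; move: {2}(n - k)%N (leqnn (n - k)) => d.
elim: d k => [|d IH] k kd kn.
  by have -> : k = n by lia.
case: (ltnP k n) => [lt_kn | ge_kn]; last by have -> : k = n by lia.
have unscale : y k = ((n - k)%:R : K)^-1 *: (y k *+ (n - k)).
  rewrite -scaler_nat scalerA mulVf ?scale1r //.
  by move/pcharf0P: charK0 => ->; rewrite subn_eq0 -ltnNge.
rewrite xrec // unscale yrec // scalerN scalerDr opprD; congr (- (_ *: _) - _).
by apply: eq_big_nat => i /andP [i_gt0 i_le]; rewrite IH //; lia.
Qed.

Unset Implicit Arguments.

Theorem theorem2p1 (K : fieldType) (charK0 : [pchar K] =i pred0)
  (R : algType K) (v : nat -> R) (HE : is_grassmann v)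
  (n : nat) (n_gt0 : (0 < n)%N) (A B : 'M[R]_n)
  (HA : forall i j, Eeven v (A i j)) (HB : forall i j, Eodd v (B i j))
  (beta : nat -> R)
  (beta_n : beta n = 0)
  (beta_k : forall k : nat, (k < n)%N ->
     beta k =
       - (((n - k)%:R : K)^-1 *:
            \sum_(1 <= i < (n - k).+1) beta (k + i) * \tr (A ^+ i))
       - (((n - k)%:R : K)^-1 *:
            \sum_(r < n - k) \sum_(s < n - k - r)
               (gchar_poly A)`_(k + r + s + 1) * \tr (A ^+ r *m B *m A ^+ s))) :
  beta 0 *: (1%:M : 'M[R]_n)
  + \sum_(1 <= k < n.+1)
      (beta k *: A ^+ k
       + (gchar_poly A)`_k *: \sum_(j < k) (A ^+ (k.-1 - j) *m B *m A ^+ j))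
  = 0.
Proof.
have [A0 def_A] : exists A0 : 'M[center R]_n, map_mx val A0 = A.
  exists (\matrix_(i, j) Center (Eeven_central HE (HA i j))).
  by apply/matrixP => i j; rewrite !mxE.
subst A; set A := map_mx val A0.
have beta_lift k : (k <= n)%N -> beta k = dchar_lift A0 B k.
  apply: (@descending_recursion_unique _ charK0 _ n (fun i => \tr (A ^+ i))
    (fun k => \sum_(r < n - k) \sum_(s < n - k - r)
                (char_poly A)`_(k + r + s + 1) * \tr (A ^+ r *m B *m A ^+ s))).
  - by rewrite beta_n dchar_lift_n.
  - exact: beta_k.
  - exact: dchar_lift_newton.
rewrite beta_lift //.
under eq_big_nat => k /andP [_ kn] do rewrite beta_lift //.
exact: dchar_lift_cayley_hamilton.
Qed.
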